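(* Let $m\ge2$ and $n$ be positive integers. For each complex matrix $a=(a_{\mathbf i})_{\mathbf i\in\mathcal M(m,n)}$ and each nonempty $S\subset\mathcal M(m,n)$, \[\frac{\sum_{\mathbf i\in S}|a_{\mathbf i}|}{E(S)}\le m\,\|a\|_{\ell_{\frac{m}{m-1},\infty}},\qquad\text{where } E(S):=\max_{1\le k\le m}\operatorname{card}\{i_k:\mathbf i\in S\}.\]
   Context: $\mathcal M(m,n)=\{\mathbf i=(i_1,\dots,i_m):1\le i_k\le n\}$. For $1\le p<\infty$ and a finite index set $I$, $\|x\|_{\ell_{p,\infty}(I)}=\sup_k k^{1/p}x_k^*$, where $x^*$ is the non-increasing rearrangement of $(|x_i|)_{i\in I}$. *)

From HB Require Import structures.
From mathcomp Require Import all_boot all_order all_algebra.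
From mathcomp Require Import reals exp.
From mathcomp Require Import complex.
Set Implicit Arguments. Unset Strict Implicit. Unset Printing Implicit Defensive.
Import Order.TTheory GRing.Theory Num.Theory.
Local Open Scope ring_scope.

(* Multi-indices M(m,n): i = (i_1,...,i_m) with coordinates in {0,...,n-1}
   (0-based instead of 1-based). *)
Notation multi_index m n := {ffun 'I_m -> 'I_n}.

Definition decr_rearr (R : realType) (I : finType) (x : I -> R) : seq R :=
  sort (fun u v : R => v <= u) [seq `|x i| | i <- enum I].

Definition weak_lp_norm (R : realType) (I : finType) (p : R) (x : I -> R) : R :=
  \big[Num.max/0]_(k < #|I|)
     ((k.+1)%:R `^ (p^-1) * nth 0 (decr_rearr x) k).

Definition Ecard (m n : nat) (S : {set multi_index m n}) : nat :=
  \max_(k < m) #|[set (f : multi_index m n) k | f in S]|.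

From HB Require Import structures.
From mathcomp Require Import all_boot all_order all_algebra.
From mathcomp Require Import reals exp.
From mathcomp Require Import complex.
From mathcomp Require Import zify ring.
Set Implicit Arguments. Unset Strict Implicit. Unset Printing Implicit Defensive.
Import Order.TTheory GRing.Theory Num.Theory.
Local Open Scope ring_scope.

(* Sort the entries of a over S decreasingly: the k-th one is at most
   ||a|| k^(-(m-1)/m), and summing over k <= |S| gives at most
   m ||a|| |S|^(1/m); the summation is done by removing the smallest entry
   and using (N+1)^(1/m) - N^(1/m) >= (N+1)^(-(m-1)/m) / m.  Finally S lies
   in the product of its m coordinate projections, so |S| <= E(S)^m. *)

Lemma count_enum (I : finType) (P : pred I) : count P (enum I) = #|P|.
Proof. by rewrite cardE /enum_mem size_filter (@eq_filter _ _ predT) ?filter_predT. Qed.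

Lemma nth_sorted_ge_count (R : realDomainType) (s : seq R) (k : nat) (t : R) :
  sorted (fun u v : R => v <= u) s -> (k < count (fun v => (t <= v)%R) s)%N ->
  t <= nth 0 s k.
Proof.
move=> s_sorted; rewrite leNgt; apply: contraTN => lt_nth_t; rewrite -leqNgt.
have ge_trans : transitive (fun u v : R => v <= u).
  by move=> b c d le_cb le_dc; apply: le_trans le_dc le_cb.
have drop_lt : all (fun v : R => v < t) (drop k s).
  apply/(all_nthP 0) => j; rewrite size_drop nth_drop ltn_subRL => lt_kj.
  apply: le_lt_trans lt_nth_t.
  apply: (sorted_leq_nth ge_trans lexx) => //; rewrite ?inE /= ?leq_addr //.
  exact: leq_ltn_trans (leq_addr _ _) lt_kj.
rewrite -(cat_take_drop k s) count_cat.
have -> : count (fun v : R => t <= v) (drop k s) = 0%N.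
  apply/eqP; rewrite -leqn0 leqNgt -has_count; apply/hasPn => v /(allP drop_lt).
  by rewrite ltNge.
by rewrite addn0 (leq_trans (count_size _ _)) // size_take; case: ltnP.
Qed.

Lemma weak_lp_norm_ge (R : realType) (I : finType) (p : R) (x : I -> R)
    (A : {set I}) (t : R) :
  A != set0 -> {in A, forall j, t <= x j} ->
  #|A|%:R `^ p^-1 * t <= weak_lp_norm p x.
Proof.
move=> A_neq0 t_le_x.
have A_gt0 : (0 < #|A|)%N by rewrite card_gt0.
have lt_A_I : (#|A|.-1 < #|I|)%N by rewrite prednK // max_card.
have t_le_nth : t <= nth 0 (decr_rearr x) #|A|.-1.
  apply: nth_sorted_ge_count; first by apply: sort_sorted => u v; apply: le_total.
  rewrite (permP (permEl (perm_sort _ _))) count_map count_enum prednK //.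
  apply: subset_leq_card; apply/subsetP => j /t_le_x t_le_xj.
  by rewrite inE (le_trans t_le_xj) ?ler_norm.
apply: le_trans (le_bigmax _ _ (Ordinal lt_A_I)) => /=.
by rewrite prednK // ler_wpM2l ?powR_ge0.
Qed.

Lemma weak_lp_norm_ge0 (R : realType) (I : finType) (p : R) (x : I -> R) :
  0 <= weak_lp_norm p x.
Proof. exact: bigmax_ge_id. Qed.

Lemma exprn_powRV (R : realType) (m : nat) (a : R) :
  (0 < m)%N -> 0 <= a -> (a `^ m%:R^-1) ^+ m = a.
Proof.
move=> m_gt0 a_ge0; rewrite -powR_mulrn ?powR_ge0 // -powRrM mulVf ?powRr1 //.
by rewrite pnatr_eq0 -lt0n.
Qed.

Lemma powR_conj_exponent (R : realType) (m : nat) (a : R) :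
  0 <= a -> a `^ (m%:R / m.-1%:R)^-1 = (a `^ m%:R^-1) ^+ m.-1.
Proof. by move=> a_ge0; rewrite invf_div mulrC powRrM powR_mulrn ?powR_ge0. Qed.

Lemma ler_subrXX (R : realDomainType) (m : nat) (u v : R) :
  0 <= v -> v <= u -> u ^+ m - v ^+ m <= m%:R * u ^+ m.-1 * (u - v).
Proof.
move=> v_ge0 v_le_u; have u_ge0 := le_trans v_ge0 v_le_u.
rewrite subrXX mulrC ler_wpM2r ?subr_ge0 //.
have -> : m%:R * u ^+ m.-1 = \sum_(i < m) u ^+ m.-1.
  by rewrite sumr_const card_ord mulr_natl.
apply: ler_sum => i _.
have split_exp : (m.-1 - i + i)%N = m.-1 by have := ltn_ord i; lia.
by rewrite -[X in _ <= u ^+ X]split_exp exprD ler_wpM2l ?exprn_ge0 ?lerXn2r.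
Qed.

Lemma sum_le_weak_lp_norm (R : realType) (I : finType) (m : nat) (x : I -> R)
    (S : {set I}) :
  (0 < m)%N -> (forall i, 0 <= x i) ->
  \sum_(i in S) x i <= m%:R * weak_lp_norm (m%:R / m.-1%:R) x * #|S|%:R `^ m%:R^-1.
Proof.
move=> m_gt0 x_ge0; set W := weak_lp_norm _ x.
have W_ge0 : 0 <= W := weak_lp_norm_ge0 _ _.
move cardS : #|S| => N; elim: N S cardS => [|N IH] S cardS.
  by rewrite (cards0_eq cardS) big_set0 !mulr_ge0 ?powR_ge0.
have S_neq0 : S != set0 by rewrite -card_gt0 cardS.
have [j0 j0S] := set0Pn _ S_neq0.
have [i0 i0S i0_min] := arg_minP x j0S; have {}i0S : i0 \in S := i0S.
set u := N.+1%:R `^ m%:R^-1; pose v : R := N%:R `^ m%:R^-1.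
have v_le_u : v <= u by rewrite ge0_ler_powR ?nnegrE ?invr_ge0 ?ler_nat.
have xi0_le : x i0 * u ^+ m.-1 <= W.
  rewrite -powR_conj_exponent // -cardS mulrC.
  exact: weak_lp_norm_ge S_neq0 i0_min.
have one_le : 1 <= m%:R * u ^+ m.-1 * (u - v).
  have pow_diff : u ^+ m - v ^+ m = 1 by rewrite !exprn_powRV // -natr1 addrC addKr.
  rewrite -[X in X <= _]pow_diff; exact: ler_subrXX (powR_ge0 _ _) v_le_u.
have xi0_le_step : x i0 <= m%:R * W * (u - v).
  apply: (@le_trans _ _ (x i0 * (m%:R * u ^+ m.-1 * (u - v)))).
    by rewrite -{1}[x i0]mulr1 ler_wpM2l.
  have -> : x i0 * (m%:R * u ^+ m.-1 * (u - v)) = m%:R * (x i0 * u ^+ m.-1) * (u - v).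
    by ring.
  by rewrite ler_wpM2r ?subr_ge0 // ler_wpM2l.
rewrite (big_setD1 i0 i0S) /=.
have cardS' : #|S :\ i0| = N by move: cardS; rewrite (cardsD1 i0 S) i0S add1n => -[].
apply: le_trans (lerD xi0_le_step (IH _ cardS')) _.
by rewrite -/v -mulrDr subrK.
Qed.

Lemma card_le_Ecard_exp (m n : nat) (S : {set multi_index m n}) :
  (#|S| <= Ecard S ^ m)%N.
Proof.
pose proj k := [set (f : multi_index m n) k | f in S].
have S_sub : S \subset family (fun k => mem (proj k)).
  by apply/subsetP => f fS; apply/familyP => k; apply: imset_f.
apply: leq_trans (subset_leq_card S_sub) _.
rewrite card_family foldrE big_map big_enum /= -[m in (_ <= _ ^ m)%N]card_ord.
rewrite -prod_nat_const; apply: leq_prod => k _.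
exact: leq_bigmax.
Qed.

Lemma Ecard_gt0 (m n : nat) (S : {set multi_index m n}) :
  (0 < m)%N -> S != set0 -> (0 < Ecard S)%N.
Proof.
move=> m_gt0 /set0Pn[f fS]; apply: leq_trans (leq_bigmax (Ordinal m_gt0)).
by rewrite card_gt0; apply/set0Pn; exists (f (Ordinal m_gt0)); apply: imset_f.
Qed.

Theorem lemma4p1 (R : realType) (m n : nat) (hm : (2 <= m)%N) (hn : (0 < n)%N)
  (a : multi_index m n -> R[i]) (S : {set multi_index m n}) (hS : S != set0) :
  (\sum_(i in S) ComplexField.Normc.normc (a i)) / (Ecard S)%:R
    <= m%:R * weak_lp_norm (m%:R / (m.-1)%:R) (fun i => ComplexField.Normc.normc (a i)).
Proof.
set x := fun i => ComplexField.Normc.normc (a i).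
have x_ge0 i : 0 <= x i by rewrite /x; case: (a i) => ? ?; apply: sqrtr_ge0.
have m_gt0 : (0 < m)%N by apply: ltnW.
have root_card_le : #|S|%:R `^ m%:R^-1 <= (Ecard S)%:R :> R.
  rewrite -(ler_pXn2r m_gt0) ?nnegrE ?powR_ge0 // exprn_powRV // -natrX ler_nat.
  exact: card_le_Ecard_exp.
rewrite ler_pdivrMr ?ltr0n ?Ecard_gt0 //.
have -> : \sum_(i in S) ComplexField.Normc.normc (a i) = \sum_(i in S) x i by [].
apply: le_trans (sum_le_weak_lp_norm S m_gt0 x_ge0) _.
by rewrite ler_wpM2l ?mulr_ge0 ?weak_lp_norm_ge0.
Qed.
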